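(* Let $n$ be a positive integer and $\mathcal{X}$ a class of finite groups with $c^{\mathcal{X}}_n<1$. Let $G$ be a profinite group, $M$ a normal open subgroup of $G$, and $\phi$ a continuous automorphism of $M$ with $\phi^n=\mathrm{id}$ such that for every normal open subgroup $N$ of $G$ contained in $M$ we have $N^\phi\subseteq N$ and $M/N\in\mathcal{X}$. If $X_{n,\phi}(M)\neq M$, then $\mathbf{m}_M(X_{n,\phi}(M))\leq c^{\mathcal{X}}_n$.
   Context: $\mathbf{m}_M$ denotes the normalized Haar measure of the compact group $M$. For a group $K$ and an automorphism $\phi$ of $K$ whose order divides $n$, writing $x^\phi$ for the image of $x$, $X_{n,\phi}(K):=\{x\in K : x x^{\phi} x^{\phi^2}\cdots x^{\phi^{n-1}}=1\}$. For a class $\mathcal{X}$ of finite groups, $$c^{\mathcal{X}}_n:=\sup\left(\left\{\frac{|X_{n,\phi}(H)|}{|H|} : H\in\mathcal{X},\ \phi\in \mathrm{Aut}(H),\ \phi^n=\mathrm{id}\right\}\setminus\{1\}\right).$$ *)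

From HB Require Import structures.
From mathcomp Require Import all_boot all_order all_algebra all_fingroup.
From mathcomp Require Import all_classical all_reals all_analysis.
Set Implicit Arguments. Unset Strict Implicit. Unset Printing Implicit Defensive.
Import Order.TTheory GRing.Theory Num.Theory.
Local Open Scope classical_set_scope.
Local Open Scope ring_scope.

Section TopGroups.
Variables (T : ptopologicalType) (mul : T -> T -> T) (inv : T -> T) (one : T).

Definition is_group_law : Prop :=
  [/\ forall x y z, mul x (mul y z) = mul (mul x y) z,
      forall x, mul one x = x /\ mul x one = x &
      forall x, mul (inv x) x = one /\ mul x (inv x) = one].

Definition is_topological_group : Prop :=
  [/\ is_group_law,
      continuous (fun p : T * T => mul p.1 p.2) &
      continuous inv].

Definition is_profinite_group : Prop :=
  [/\ is_topological_group, compact [set: T], hausdorff_space T &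
      totally_disconnected [set: T]].

Definition is_subgroup (H : set T) : Prop :=
  [/\ H one, forall x y, H x -> H y -> H (mul x y) &
      forall x, H x -> H (inv x)].

Definition is_normal_subgroup (H : set T) : Prop :=
  is_subgroup H /\ forall g x, H x -> H (mul (inv g) (mul x g)).

Definition is_open_normal_subgroup (H : set T) : Prop :=
  is_normal_subgroup H /\ open H.

Definition is_continuous_automorphism (M : set T) (phi : T -> T) : Prop :=
  [/\ set_bij M M phi,
      forall x y, M x -> M y -> phi (mul x y) = mul (phi x) (phi y) &
      {within M, continuous phi}].

Fixpoint twisted_norm (phi : T -> T) (k : nat) (x : T) : T :=
  match k with
  | 0 => one
  | k'.+1 => mul (twisted_norm phi k' x) (iter k' phi x)
  end.

Definition Xset (n : nat) (phi : T -> T) (M : set T) : set T :=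
  [set x | M x /\ twisted_norm phi n x = one].

Definition ltrans (x : T) (A : set T) : set T := [set mul x a | a in A].

(* normalized (left) Haar measure of the subgroup M (M open in T, so the
   Borel sets of M are the Borel sets of T contained in M): a measure on
   the Borel sigma-algebra of T giving M mass 1 and invariant under left
   translation by elements of M on Borel subsets of M. *)
Definition is_normalized_Haar_measure_on (R : realType) (M : set T)
    (mu : {measure set (g_sigma_algebraType (@open T)) -> \bar R}) : Prop :=
  mu M = 1%E /\
  forall (x : T) (A : set (g_sigma_algebraType (@open T))),
    M x -> measurable A -> A `<=` M -> mu (ltrans x A) = mu A.

End TopGroups.

Local Open Scope group_scope.

Definition group_class := forall gT : finGroupType, {group gT} -> Prop.

Definition fXset (gT : finGroupType) (n : nat) (phi : {perm gT}) (H : {set gT})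
  : {set gT} := [set x in H | \prod_(i < n) (phi ^+ i)%g x == 1].

Definition cX_set (R : realType) (Xc : group_class) (n : nat) : set R :=
  [set r : R | exists (gT : finGroupType) (H : {group gT}) (phi : {perm gT}),
      [/\ Xc gT H, phi \in Aut H, (phi ^+ n)%g = 1%g &
          r = (#|fXset n phi H|%:R / #|H|%:R)%R]] `\` [set 1%R].

Arguments cX_set R Xc n : clear implicits.

Definition cX (R : realType) (Xc : group_class) (n : nat) : R :=
  sup (cX_set R Xc n).
Arguments cX R Xc n : clear implicits.

(* M/N belongs to the class Xc (up to isomorphism): there is a group
   H in Xc and a surjective homomorphism M -> H with kernel N. *)
Definition quotient_in_class (T : ptopologicalType) (mul : T -> T -> T)
    (one : T) (Xc : group_class) (M N : set T) : Prop :=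
  exists (gT : finGroupType) (H : {group gT}) (f : T -> gT),
    [/\ Xc gT H,
        forall x, M x -> f x \in H,
        forall h, h \in H -> exists2 x, M x & f x = h,
        forall x y, M x -> M y -> f (mul x y) = f x * f y &
        forall x, M x -> (f x = 1 <-> N x)].

(* Pick x in M whose twisted norm t = x x^phi ... x^(phi^(n-1))
   is not 1.  A compact, Hausdorff, totally disconnected group is
   zero-dimensional, so some open normal subgroup avoids t; intersected with M
   it gives an open normal N with M/N = H finite.  As phi preserves N, it
   induces an automorphism p of H with p^n = 1, and the projection
   f : M -> H carries twisted norms to twisted norms.  Hence X_{n,phi}(M) lies
   in the preimage of X_{n,p}(H), a union of |X_{n,p}(H)| cosets of N, each
   of Haar measure 1/|H|.  Since f x lies outside X_{n,p}(H), the ratio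
   |X_{n,p}(H)|/|H| is not 1, so it is at most c^X_n. *)

Set Warnings "-notation-overridden,-ambiguous-paths,-notation-incompatible-prefix,-deprecated".
From HB Require Import structures.
From mathcomp Require Import all_boot all_order all_algebra all_fingroup.
From mathcomp Require Import all_classical all_reals all_analysis.
Set Implicit Arguments. Unset Strict Implicit. Unset Printing Implicit Defensive.
Import Order.TTheory GRing.Theory Num.Theory.
Local Open Scope classical_set_scope.
Local Open Scope ring_scope.

Section ZeroDimensional.
Variable T : topologicalType.

Definition quasi_component (x : T) : set T :=
  \bigcap_(C in [set C | clopen C /\ C x]) C.

Lemma quasi_componentP (x y : T) :
  quasi_component x y <-> forall C, clopen C -> C x -> C y.
Proof. by split => [Qy C cC Cx|Cy C [cC Cx]]; [exact: Qy | exact: Cy]. Qed.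

Lemma compact_separate_closed : hausdorff_space T -> compact [set: T] ->
  forall A B : set T, closed A -> closed B -> A `&` B = set0 ->
  exists U V, [/\ open U, open V, A `<=` U, B `<=` V & U `&` V = set0].
Proof.
move=> hT cT A B cA cB AB0.
have snA : set_nbhs A (~` B).
  apply/set_nbhsP; exists (~` B); split => //; first exact: closed_openC.
  by move=> a Aa Ba; have : (A `&` B) a by []; rewrite AB0.
have [D snD clDB] := compact_normal hT cT cA snA.
exists D°, (~` closure D); split.
- exact: open_interior.
- exact/closed_openC/closed_closure.
- exact: snD.
- by move=> b Bb /clDB.
- by rewrite -subset0 => z [/interior_subset/subset_closure].
Qed.

Lemma quasi_component_sub_open (x : T) (O : set T) :
  compact [set: T] -> open O -> quasi_component x `<=` O ->
  exists C, [/\ clopen C, C x & C `<=` O].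
Proof.
move=> cT oO QO; apply: contrapT => nC.
(* Otherwise the traces on [~` O] of the clopen neighbourhoods of [x] form a
   proper filter, and a cluster point of it in the compact set [~` O] would
   lie in the quasi-component of [x]. *)
pose F := filter_from [set C : set T | clopen C /\ C x] (fun C => C `&` ~` O).
have FF : Filter F.
  apply: filter_from_filter; first by exists setT; split => //; exact: clopenT.
  move=> C1 C2 [c1 x1] [c2 x2]; exists (C1 `&` C2); first by split; [exact: clopenI|].
  by move=> z [[? ?] ?]; split; split.
have PF : ProperFilter F.
  apply: filter_from_proper => C [cC Cx]; apply/set0P/eqP => /subsets_disjoint CO.
  by apply: nC; exists C.
have [z [nOz clz]] : ~` O `&` cluster F !=set0.
  apply: (subclosed_compact (open_closedC oO) cT) => //.
  by exists setT; [split => //; exact: clopenT | move=> ? []].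
have [C [cC Cx] nCz] : exists2 C, clopen C /\ C x & ~ C z.
  apply: contrapT => h; apply/nOz/QO/quasi_componentP => C cC Cx.
  by apply: contrapT => nCz; apply: h; exists C.
have : (C `&` ~` O) `&` ~` C !=set0.
  apply: clz; first by exists C.
  by apply: open_nbhs_nbhs; split => //; exact/closed_openC/(cC.2).
by case=> w [[]].
Qed.

Lemma quasi_component_sub_closed (x : T) (A B : set T) :
  hausdorff_space T -> compact [set: T] ->
  closed A -> closed B -> A `&` B = set0 ->
  quasi_component x `<=` A `|` B -> A x -> quasi_component x `<=` A.
Proof.
move=> hT cT cA cB AB0 QAB Ax.
have [U [V [oU oV AU BV UV0]]] := compact_separate_closed hT cT cA cB AB0.
have UVdisj z : U z -> V z -> False.
  by move=> Uz Vz; have : (U `&` V) z by []; rewrite UV0.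
have [C [cC Cx CUV]] : exists C, [/\ clopen C, C x & C `<=` U `|` V].
  apply: quasi_component_sub_open => //; first exact: openU.
  by move=> z /QAB [/AU|/BV] ?; [left|right].
have CUE : C `&` U = C `&` ~` V.
  apply/seteqP; split => z [Cz Uz]; split => //; first exact: UVdisj.
  by case: (CUV z Cz).
have cCU : clopen (C `&` U).
  split; first exact: (openI cC.1 oU).
  by rewrite CUE; apply: closedI; [exact: cC.2 | exact: open_closedC].
move=> z Qz; have [_ Uz] := (quasi_componentP x z).1 Qz _ cCU (conj Cx (AU _ Ax)).
by case: (QAB z Qz) => // /BV /(UVdisj _ Uz).
Qed.

Lemma quasi_component_connected (x : T) :
  hausdorff_space T -> compact [set: T] -> connected (quasi_component x).
Proof.
move=> hT cT B [b Bb] [U oU BQU] [C cC BQC].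
set Q := quasi_component x.
have cQ : closed Q by apply: closed_bigI => D [[]].
have cQC : closed (Q `&` C) by exact: closedI.
have cQO : closed (Q `&` ~` U) by apply: closedI => //; exact: open_closedC.
have disj : (Q `&` C) `&` (Q `&` ~` U) = set0.
  apply/seteqP; split => // z [QCz [_ nUz]]; apply: nUz.
  by move: QCz; rewrite -BQC BQU => -[].
have cover : Q `<=` (Q `&` C) `|` (Q `&` ~` U).
  move=> z Qz; have [Uz|nUz] := pselect (U z); [left|by right].
  by rewrite -BQC BQU.
have Qx : Q x by apply/quasi_componentP.
have [Bx|nBx] := pselect (B x).
  have Q_C : Q `<=` Q `&` C.
    by apply: (quasi_component_sub_closed hT cT cQC cQO disj cover); rewrite -BQC.
  by rewrite BQC; apply/seteqP; split => [z []|z /Q_C].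
have Q_nO : Q `<=` Q `&` ~` U.
  apply: (quasi_component_sub_closed hT cT cQO cQC); first by rewrite setIC.
    by rewrite setUC.
  by split => // Ux; apply: nBx; rewrite BQU.
by move: Bb; rewrite BQU => -[/Q_nO[]].
Qed.

Lemma compact_totally_disconnected_zero_dimensional :
  hausdorff_space T -> compact [set: T] -> totally_disconnected [set: T] ->
  zero_dimensional T.
Proof.
move=> hT cT tdT x y /eqP xy; apply: contrapT => nC.
have Qy : quasi_component x y.
  apply/quasi_componentP => C cC Cx; apply: contrapT => nCy; apply: nC.
  by exists C.
have Qx : quasi_component x x by apply/quasi_componentP.
have := connected_component_max Qx (@subsetT _ _)
  (quasi_component_connected hT cT) Qy.
by rewrite tdT // => yx; apply: xy.
Qed.

End ZeroDimensional.

Lemma continuous_nbhs_preimage (X Y : topologicalType) (h : X -> Y) (p : X) (W : set Y) :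
  {for p, continuous h} -> open W -> W (h p) -> nbhs p (h @^-1` W).
Proof. by move=> ch oW Wh; apply: ch; exact: open_nbhs_nbhs. Qed.

Section GroupLaw.
Variables (T : ptopologicalType) (mul : T -> T -> T) (inv : T -> T) (one : T).
Hypothesis law : is_group_law mul inv one.

Lemma gmulA x y z : mul x (mul y z) = mul (mul x y) z. Proof. by case: law. Qed.
Lemma gmul1l x : mul one x = x. Proof. by case: law => _ /(_ x) []. Qed.
Lemma gmul1r x : mul x one = x. Proof. by case: law => _ /(_ x) []. Qed.
Lemma gmulVl x : mul (inv x) x = one. Proof. by case: law => _ _ /(_ x) []. Qed.
Lemma gmulVr x : mul x (inv x) = one. Proof. by case: law => _ _ /(_ x) []. Qed.
Lemma gmulKl x y : mul (inv x) (mul x y) = y. Proof. by rewrite gmulA gmulVl gmul1l. Qed.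
Lemma gmulKVl x y : mul x (mul (inv x) y) = y. Proof. by rewrite gmulA gmulVr gmul1l. Qed.
Lemma gmulKr x y : mul (mul x y) (inv y) = x. Proof. by rewrite -gmulA gmulVr gmul1r. Qed.

Lemma ginv_uniq x y : mul x y = one -> inv x = y.
Proof. by move=> xy1; rewrite -[inv x]gmul1r -xy1 gmulKl. Qed.

Lemma ginvK x : inv (inv x) = x. Proof. by apply: ginv_uniq; rewrite gmulVl. Qed.
Lemma ginv1 : inv one = one. Proof. by apply: ginv_uniq; rewrite gmul1l. Qed.
Lemma ginvM x y : inv (mul x y) = mul (inv y) (inv x).
Proof. by apply: ginv_uniq; rewrite -gmulA gmulKVl gmulVr. Qed.

Lemma ltransE a (A : set T) : ltrans mul a A = [set y | A (mul (inv a) y)].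
Proof.
apply/seteqP; split => [_ [z Az <-]|y Ay]; first by rewrite /= gmulKl.
by exists (mul (inv a) y); rewrite ?gmulKVl.
Qed.

End GroupLaw.

Section TopologicalGroup.
Variables (T : ptopologicalType) (mul : T -> T -> T) (inv : T -> T) (one : T).
Hypotheses (law : is_group_law mul inv one)
  (mul_cont : continuous (fun p : T * T => mul p.1 p.2)) (inv_cont : continuous inv).
Local Notation is_subgroup := (is_subgroup mul inv one).

Lemma continuous_gmul (X : topologicalType) (F G : X -> T) (p : X) :
  {for p, continuous F} -> {for p, continuous G} ->
  {for p, continuous (fun z => mul (F z) (G z))}.
Proof.
move=> cF cG; apply: (@continuous_comp _ _ _ (fun z => (F z, G z)) (fun q : T * T => mul q.1 q.2)).
  exact: cvg_pair.
exact: mul_cont.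
Qed.

Lemma continuous_lmul a : continuous (mul a).
Proof. by move=> x; apply: continuous_gmul; [exact: cvg_cst | exact: cvg_id]. Qed.

Lemma open_ltrans a (A : set T) : open A -> open (ltrans mul a A).
Proof.
by rewrite (ltransE law) => oA; apply: open_comp => // y _; exact: continuous_lmul.
Qed.

Lemma subgroup_nbhs1_open (V : set T) : is_subgroup V -> nbhs one V -> open V.
Proof.
move=> [_ VM _] V1; rewrite openE => g Vg; change (nbhs g V).
have nV : nbhs g [set z | V (mul (inv g) z)].
  by apply: (@continuous_lmul (inv g) g V); rewrite (gmulVl law).
by apply: filterS nV => z /= Vz; rewrite -(gmulKVl law g z); exact: VM.
Qed.

Lemma open_subgroup_closed (V : set T) : is_subgroup V -> open V -> closed V.
Proof.
move=> [V1 VM VV] oV; rewrite -openC openE => y nVy; change (nbhs y (~` V)).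
have : nbhs y (ltrans mul y V).
  apply: open_nbhs_nbhs; split; first exact: open_ltrans.
  by exists one; rewrite ?(gmul1r law).
apply: filterS => _ [v Vv <-] Vyv; apply: nVy.
by rewrite -(gmulKr law y v); apply: VM => //; exact: VV.
Qed.

Lemma near_mul_mulV (U : set T) (u : T) : open U -> U u ->
  \forall x \near u & g \near one, U (mul x g) /\ U (mul x (inv g)).
Proof.
move=> oU Uu.
have mul_near (h : T * T -> T) : {for (u, one), continuous h} -> h (u, one) = u ->
    nbhs (u, one) (h @^-1` U).
  by move=> ch hu; apply: continuous_nbhs_preimage; rewrite ?hu.
have c2 : {for (u, one), continuous (fun q : T * T => mul q.1 (inv q.2))}.
  apply: continuous_gmul; first exact: cvg_fst.
  by apply: (@continuous_comp _ _ _ snd inv); [exact: cvg_snd | exact: inv_cont].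
have N1 := mul_near (fun q => mul q.1 q.2) (@mul_cont (u, one)) (gmul1r law u).
have N2 := mul_near _ c2 (etrans (congr1 _ (ginv1 law)) (gmul1r law u)).
by apply: filterS (filterI N1 N2) => -[x g].
Qed.

Lemma compact_open_sub_open_subgroup (U : set T) : compact U -> open U -> U one ->
  exists V, [/\ is_subgroup V, open V & V `<=` U].
Proof.
move=> cU oU U1.
(* The stabiliser of [U] under right translation: a subgroup inside [U],
   which the compactness of [U] makes a neighbourhood of [one]. *)
pose V := [set g | forall u, U u -> U (mul u g) /\ U (mul u (inv g))].
have sgV : is_subgroup V.
  split; first by move=> u Uu; rewrite (ginv1 law) (gmul1r law).
    move=> g h Vg Vh u Uu; split; first by rewrite (gmulA law); apply: (Vh _ (Vg _ Uu).1).1.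
    by rewrite (ginvM law) (gmulA law); apply: (Vg _ (Vh _ Uu).2).2.
  by move=> g Vg u Uu; rewrite (ginvK law); case: (Vg u Uu).
exists V; split => //; last by move=> g /(_ one U1) []; rewrite (gmul1l law).
apply: subgroup_nbhs1_open => //.
have := (compact_near_coveringP U).1 cU T (nbhs one)
  (fun g u => U (mul u g) /\ U (mul u (inv g))) _ (fun u Uu => near_mul_mulV oU Uu).
by apply => g gU u Uu; exact: gU.
Qed.

Lemma open_subgroup_normal_core (V : set T) :
  compact [set: T] -> is_subgroup V -> open V ->
  exists N, is_open_normal_subgroup mul inv one N /\ N `<=` V.
Proof.
move=> cT [V1 VM VV] oV.
(* The intersection of all conjugates of [V]; compactness of the whole group
   makes it open. *)
pose N := [set x | forall g, V (mul (inv g) (mul x g))].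
exists N; split; last by move=> x /(_ one); rewrite (ginv1 law) (gmul1l law) (gmul1r law).
split; first split; first split.
- by move=> g; rewrite (gmul1l law) (gmulVl law).
- move=> x y Nx Ny g.
  have -> : mul (inv g) (mul (mul x y) g) =
            mul (mul (inv g) (mul x g)) (mul (inv g) (mul y g)).
    by rewrite !(gmulA law) (gmulKr law).
  exact: VM.
- move=> x Nx g.
  have -> : mul (inv g) (mul (inv x) g) = inv (mul (inv g) (mul x g)).
    by rewrite !(ginvM law) (ginvK law) (gmulA law).
  exact: VV.
- move=> h x Nx g.
  have -> : mul (inv g) (mul (mul (inv h) (mul x h)) g) =
            mul (inv (mul h g)) (mul x (mul h g)).
    by rewrite (ginvM law) !(gmulA law).
  exact: Nx.
rewrite openE => x0 Nx0; change (nbhs x0 N).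
have conj_cont g : {for (g, x0), continuous (fun q : T * T => mul (inv q.1) (mul q.2 q.1))}.
  apply: continuous_gmul.
    by apply: (@continuous_comp _ _ _ fst inv); [exact: cvg_fst | exact: inv_cont].
  by apply: continuous_gmul; [exact: cvg_snd | exact: cvg_fst].
have nN : nbhs x0 [set x | [set: T] `<=` (fun g => V (mul (inv g) (mul x g)))].
  exact: (compact_near_coveringP [set: T]).1 cT T (nbhs x0)
    (fun x g => V (mul (inv g) (mul x g))) _
    (fun g _ => continuous_nbhs_preimage (conj_cont g) oV (Nx0 g)).
by apply: filterS nN => x Vx g; exact: Vx.
Qed.

End TopologicalGroup.

Lemma profinite_open_normal_subgroup_avoid (T : ptopologicalType)
    (mul : T -> T -> T) (inv : T -> T) (one : T) (t : T) :
  is_profinite_group mul inv one -> t <> one ->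
  exists N, is_open_normal_subgroup mul inv one N /\ ~ N t.
Proof.
move=> [[law mul_cont inv_cont] cT hT tdT] t1.
have one_t : one != t by apply/eqP/nesym.
have [U [[oU cU] U1 nUt]] :=
  compact_totally_disconnected_zero_dimensional hT cT tdT one_t.
have [V [sgV oV VU]] := compact_open_sub_open_subgroup law mul_cont inv_cont
  (subclosed_compact cU cT (@subsetT _ U)) oU U1.
have [N [oN NV]] := open_subgroup_normal_core law mul_cont inv_cont cT sgV oV.
by exists N; split => // /NV /VU.
Qed.

Lemma measurable_open (T : ptopologicalType) (A : set T) :
  open A -> measurable (A : set (g_sigma_algebraType (@open T))).
Proof. exact: sub_sigma_algebra. Qed.

Lemma measurable_closed (T : ptopologicalType) (A : set T) :
  closed A -> measurable (A : set (g_sigma_algebraType (@open T))).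
Proof.
move=> cA; rewrite -[A]setCK; apply: measurableC; apply: measurable_open.
exact: closed_openC.
Qed.

Section TwistedNormIn.
Variables (T : ptopologicalType) (mul : T -> T -> T) (inv : T -> T) (one : T).
Variables (M : set T) (phi : T -> T).
Hypotheses (sgM : is_subgroup mul inv one M) (phiM : forall x, M x -> M (phi x)).

Lemma iter_phiM k x : M x -> M (iter k phi x).
Proof. by move=> Mx; elim: k => //= k; exact: phiM. Qed.

Lemma twisted_normM k x : M x -> M (twisted_norm mul one phi k x).
Proof.
case: sgM => M1 MM _ Mx.
by elim: k => //= k Mk; apply: MM => //; exact: iter_phiM.
Qed.

End TwistedNormIn.

Lemma exists_twisted_norm_neq1 (T : ptopologicalType) (mul : T -> T -> T) (one : T)
    (M : set T) (phi : T -> T) (n : nat) :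
  Xset mul one n phi M <> M ->
  exists2 x, M x & twisted_norm mul one phi n x <> one.
Proof.
move=> XM; apply: contrapT => tM; apply: XM; apply/seteqP; split => [y [] //|y My].
by split => //; apply: contrapT => ty; apply: tM; exists y.
Qed.

Section FiniteQuotient.
Variables (T : ptopologicalType) (mul : T -> T -> T) (inv : T -> T) (one : T).
Variables (M N : set T) (gT : finGroupType) (H : {group gT}) (f : T -> gT).
Hypotheses (law : is_group_law mul inv one) (sgM : is_subgroup mul inv one M)
  (NM : N `<=` M) (fH : forall x, M x -> f x \in H)
  (f_onto : forall h, h \in H -> exists2 x, M x & f x = h)
  (fM : forall x y, M x -> M y -> f (mul x y) = (f x * f y)%g)
  (f_ker : forall x, M x -> (f x = 1%g <-> N x)).

Lemma hom1 : f one = 1%g.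
Proof.
case: sgM => M1 _ _; apply: (mulgI (f one)).
by rewrite -fM // (gmul1l law) mulg1.
Qed.

Lemma homV y : M y -> f (inv y) = (f y)^-1%g.
Proof.
case: sgM => _ _ MV My; apply: (mulIg (f y)).
by rewrite -fM ?(gmulVl law) ?hom1 ?mulVg //; exact: MV.
Qed.

Definition hom_fiber (h : gT) : set T := [set y | M y /\ f y = h].
Definition hom_preim (A : {set gT}) : set T := [set y | M y /\ f y \in A].

Lemma hom_fiberE a : M a -> hom_fiber (f a) = ltrans mul a N.
Proof.
case: sgM => _ MM MV Ma; rewrite (ltransE law); apply/seteqP; split => y /=.
- move=> [My fy]; have May := MM _ _ (MV _ Ma) My.
  by apply/(f_ker May); rewrite fM ?homV ?fy ?mulVg //; exact: MV.
- move=> Nay; rewrite -(gmulKVl law a y); have May := NM Nay.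
  by split; [exact: MM | rewrite fM // (f_ker May).2 // mulg1].
Qed.

Section InducedAutomorphism.
Variables (phi : T -> T) (n : nat).
Hypotheses (phiM : forall x, M x -> M (phi x))
  (phi_mul : forall x y, M x -> M y -> phi (mul x y) = mul (phi x) (phi y))
  (phiN : phi @` N `<=` N) (phi_n : forall x, M x -> iter n phi x = x)
  (n_gt0 : (0 < n)%N).

(* Independent of the chosen preimage because [phi] maps the kernel [N] into
   itself; the identity outside [H], so that it is a permutation of [gT]. *)
Definition induced_map (h : gT) : gT :=
  if h \in H then f (phi (get (hom_fiber h))) else h.

Lemma induced_mapE y : M y -> induced_map (f y) = f (phi y).
Proof.
move=> My; rewrite /induced_map fH //.
set z := get _; have [Mz fz] : M z /\ f z = f y.
  by apply: (@getPex _ (hom_fiber (f y))); exists y.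
have Nyz : N (mul (inv y) z).
  have : ltrans mul y N z by rewrite -hom_fiberE.
  by rewrite (ltransE law).
have Myz := NM Nyz; case: sgM => _ MM _.
rewrite -(gmulKVl law y z) phi_mul // fM; try exact: phiM.
have -> : f (phi (mul (inv y) z)) = 1%g.
  by apply/(f_ker (phiM Myz))/phiN; exists (mul (inv y) z).
by rewrite mulg1.
Qed.

Lemma iter_induced_map k y : M y -> iter k induced_map (f y) = f (iter k phi y).
Proof.
by move=> My; elim: k => //= k ->; rewrite induced_mapE //; exact: (iter_phiM phiM).
Qed.

Lemma induced_aut : exists p : {perm gT},
  [/\ p \in Aut H, (p ^+ n)%g = 1%g & forall y, M y -> p (f y) = f (phi y)].
Proof.
have iter_n h : iter n induced_map h = h.
  have [hH|hH] := boolP (h \in H).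
    by have [y My <-] := f_onto hH; rewrite iter_induced_map // phi_n.
  by elim: n => //= k ->; rewrite /induced_map (negbTE hH).
have inj : injective induced_map.
  by apply: (can_inj (g := iter n.-1 induced_map)) => h; rewrite -iterSr prednK.
pose p := perm inj; exists p; split.
- rewrite inE; apply/andP; split.
    apply/fintype.subsetP => h; rewrite inE permE; apply: contraR => hH.
    by rewrite /induced_map (negbTE hH).
  apply/morphicP => a b aH bH; rewrite !permE.
  have [[x Mx <-] [y My <-]] := (f_onto aH, f_onto bH).
  have Mxy : M (mul x y) by case: sgM => _ MM _; exact: MM.
  by rewrite -fM // !induced_mapE // phi_mul // fM //; exact: phiM.
- by apply/permP => h; rewrite permX perm1 (eq_iter (permE inj)) iter_n.
- by move=> y My; rewrite permE induced_mapE.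
Qed.

Lemma prod_twisted_norm (p : {perm gT}) y k :
  (forall z, M z -> p (f z) = f (phi z)) -> M y ->
  (\prod_(i < k) (p ^+ i)%g (f y))%g = f (twisted_norm mul one phi k y).
Proof.
move=> pf My; have pX j : (p ^+ j)%g (f y) = f (iter j phi y).
  by rewrite permX; elim: j => //= j ->; rewrite pf //; exact: (iter_phiM phiM).
elim: k => [|k IH]; first by rewrite big_ord0 hom1.
rewrite big_ord_recr /= IH pX fM //; first exact: (twisted_normM sgM phiM).
exact: (iter_phiM phiM).
Qed.

Lemma mem_fXset_hom (p : {perm gT}) y :
  (forall z, M z -> p (f z) = f (phi z)) -> M y ->
  (f y \in fXset n p H) = (f (twisted_norm mul one phi n y) == 1%g).
Proof. by move=> pf My; rewrite inE fH //= prod_twisted_norm. Qed.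

End InducedAutomorphism.

Section HaarMeasure.
Variables (R : realType) (mu : {measure set (g_sigma_algebraType (@open T)) -> \bar R}).
Hypotheses (mul_cont : continuous (fun p : T * T => mul p.1 p.2)) (oN : open N)
  (haar : is_normalized_Haar_measure_on mul M mu).

Lemma measurable_hom_fiber h : h \in H ->
  measurable (hom_fiber h : set (g_sigma_algebraType (@open T))).
Proof.
move=> /f_onto[a Ma <-]; rewrite hom_fiberE //; apply: measurable_open.
exact: (open_ltrans law mul_cont).
Qed.

Lemma haar_hom_fiber h : h \in H -> mu (hom_fiber h) = mu N.
Proof.
move=> /f_onto[a Ma <-]; rewrite hom_fiberE //; apply: haar.2 => //.
exact: measurable_open.
Qed.

Lemma hom_preim_bigcup (A : {set gT}) :
  hom_preim A = \bigcup_(h in [set` enum A]) hom_fiber h.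
Proof.
apply/seteqP; split => [y [My fyA]|y [h /= hA [My fyh]]].
  by exists (f y); rewrite /= ?mem_enum.
by split; rewrite // fyh -mem_enum.
Qed.

Lemma measurable_hom_preim (A : {set gT}) : A \subset H ->
  measurable (hom_preim A : set (g_sigma_algebraType (@open T))).
Proof.
move=> /fintype.subsetP AH; rewrite hom_preim_bigcup.
apply: fin_bigcup_measurable => [|h /=]; first exact: finite_seq.
by rewrite mem_enum => /AH; exact: measurable_hom_fiber.
Qed.

Lemma haar_hom_preim_card (A : {set gT}) : A \subset H ->
  mu (hom_preim A) = (mu N *+ #|A|)%E.
Proof.
move=> /fintype.subsetP AH; rewrite hom_preim_bigcup measure_fin_bigcup.
- rewrite -fsbig_seq ?enum_uniq // big_enum /= (eq_bigr (fun=> mu N)).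
    by rewrite sumr_const.
  by move=> h /AH; exact: haar_hom_fiber.
- exact: finite_seq.
- by move=> h1 h2 _ _ [y [[_ <-] [_ <-]]].
- by move=> h /=; rewrite mem_enum => /AH; exact: measurable_hom_fiber.
Qed.

Lemma haar_kernel : mu N = (#|H|%:R^-1)%:E.
Proof.
have preimH : hom_preim H = M.
  by apply/seteqP; split => [y [] //|y My]; split => //; exact: fH.
have := haar_hom_preim_card (subxx H); rewrite preimH haar.1.
have HR0 : (#|H|%:R : R) != 0 by rewrite pnatr_eq0 -lt0n cardG_gt0.
rewrite -(prednK (cardG_gt0 H)) in HR0 *.
case: (mu N) => [r||]; rewrite ?enatmul_pinfty ?enatmul_ninfty // -EFin_natmul.
by move=> [] r1; congr _%:E; apply: (mulIf HR0); rewrite mulVf // mulr_natr.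
Qed.

Lemma haar_hom_preim (A : {set gT}) : A \subset H ->
  mu (hom_preim A) = (#|A|%:R / #|H|%:R)%:E.
Proof.
by move=> AH; rewrite haar_hom_preim_card // haar_kernel -EFin_natmul mulrC mulr_natr.
Qed.

End HaarMeasure.
End FiniteQuotient.

Lemma open_normal_subgroupI (T : ptopologicalType) (mul : T -> T -> T)
    (inv : T -> T) (one : T) (A B : set T) :
  is_open_normal_subgroup mul inv one A -> is_open_normal_subgroup mul inv one B ->
  is_open_normal_subgroup mul inv one (A `&` B).
Proof.
move=> [[[A1 AM AV] An] oA] [[[B1 BM BV] Bn] oB]; split; last exact: openI.
split; first split.
- by split.
- by move=> x y [Ax Bx] [Ay By]; split; [exact: AM | exact: BM].
- by move=> x [Ax Bx]; split; [exact: AV | exact: BV].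
by move=> g x [Ax Bx]; split; [exact: An | exact: Bn].
Qed.

Section TwistedNormContinuity.
Variables (T : ptopologicalType) (mul : T -> T -> T) (inv : T -> T) (one : T).
Variables (M : set T) (phi : T -> T).
Hypotheses (law : is_group_law mul inv one)
  (mul_cont : continuous (fun p : T * T => mul p.1 p.2))
  (sgM : is_subgroup mul inv one M) (oM : open M)
  (phiM : forall x, M x -> M (phi x)) (phi_cont : {within M, continuous phi}).

Lemma continuous_twisted_norm k y : M y ->
  {for y, continuous (twisted_norm mul one phi k)}.
Proof.
move=> My; have phi_cont_in : {in M, continuous phi}.
  by rewrite -continuous_open_subspace.
have iter_cont j : {for y, continuous (iter j phi)}.
  elim: j => [|j IH]; first exact: cvg_id.
  apply: (continuous_comp (f := iter j phi) (g := phi)) => //.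
  by apply: phi_cont_in; rewrite inE; exact: (iter_phiM phiM).
elim: k => [|k IH]; first exact: cvg_cst.
exact: (continuous_gmul mul_cont IH (iter_cont k)).
Qed.

Lemma closed_Xset n : hausdorff_space T -> closed (Xset mul one n phi M).
Proof.
move=> hT; rewrite -openC openE => y nXy; change (nbhs y (~` Xset mul one n phi M)).
have [My|nMy] := pselect (M y); last first.
  have : nbhs y (~` M).
    apply: open_nbhs_nbhs; split => //; apply/closed_openC.
    exact: (open_subgroup_closed law mul_cont).
  by apply: filterS => z nMz [].
have c1 : closed [set one] by apply/accessible_closed_set1/hausdorff_accessible.
have : nbhs y (twisted_norm mul one phi n @^-1` ~` [set one]).
  apply: continuous_nbhs_preimage; first exact: continuous_twisted_norm.
    exact: closed_openC.
  by move=> /= tn1; apply: nXy.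
by apply: filterS => z /= tz [_].
Qed.

End TwistedNormContinuity.

Lemma fXset_sub (gT : finGroupType) (n : nat) (p : {perm gT}) (H : {set gT}) :
  fXset n p H \subset H.
Proof. by apply/fintype.subsetP => h; rewrite inE => /andP[]. Qed.

Lemma cX_set_le1 (R : realType) (Xc : group_class) (n : nat) :
  cX_set R Xc n `<=` [set r | r <= 1].
Proof.
move=> _ [[gT [H [p [_ _ _ ->]]]] _] /=.
rewrite ler_pdivrMr ?mul1r ?ler_nat ?ltr0n ?cardG_gt0 //.
exact/subset_leq_card/fXset_sub.
Qed.

Lemma le_cX (R : realType) (Xc : group_class) (n : nat) (gT : finGroupType)
    (H : {group gT}) (p : {perm gT}) :
  Xc gT H -> p \in Aut H -> (p ^+ n)%g = 1%g -> fXset n p H != H :> {set gT} ->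
  #|fXset n p H|%:R / #|H|%:R <= cX R Xc n.
Proof.
move=> XcH pAut pn SH.
have ratio_lt1 : #|fXset n p H|%:R / #|H|%:R < 1 :> R.
  rewrite ltr_pdivrMr ?ltr0n ?cardG_gt0 // mul1r ltr_nat.
  by apply: proper_card; rewrite finset.properEneq SH fXset_sub.
have ratio_in : cX_set R Xc n (#|fXset n p H|%:R / #|H|%:R).
  split; first by exists gT, H, p.
  by move=> /= r1; move: ratio_lt1; rewrite r1 ltxx.
have hs : has_sup (cX_set R Xc n).
  by split; [exists (#|fXset n p H|%:R / #|H|%:R) | exists 1; exact: cX_set_le1].
exact: sup_upper_bound hs _ ratio_in.
Qed.

Theorem proposition2p5 (R : realType) (n : nat) (Xc : group_class)
  (T : ptopologicalType) (mul : T -> T -> T) (inv : T -> T) (one : T)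
  (M : set T) (phi : T -> T)
  (mu : {measure set (g_sigma_algebraType (@open T)) -> \bar R}) :
  (0 < n)%N ->
  cX R Xc n < 1 ->
  is_profinite_group mul inv one ->
  is_open_normal_subgroup mul inv one M ->
  is_continuous_automorphism mul M phi ->
  (forall x, M x -> iter n phi x = x) ->
  (forall N : set T, is_open_normal_subgroup mul inv one N -> N `<=` M ->
     phi @` N `<=` N /\ quotient_in_class mul one Xc M N) ->
  is_normalized_Haar_measure_on mul M mu ->
  Xset mul one n phi M <> M ->
  (mu (Xset mul one n phi M) <= (cX R Xc n)%:E)%E.
Proof.
move=> n_gt0 _ G_prof M_on [[phiM _ _] phi_mul phi_cont] phi_n quotients haar XM.
have [[law mul_cont _] _ hT _] := G_prof; have [[sgM _] oM] := M_on.
have [x Mx tx] := exists_twisted_norm_neq1 XM.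
have [N0 [N0_on nN0]] := profinite_open_normal_subgroup_avoid G_prof tx.
have [N_on NM] := (open_normal_subgroupI N0_on M_on, @subIsetr _ N0 M).
have [phiN [gT [H [f [XcH fH f_onto fM f_ker]]]]] := quotients _ N_on NM.
have [p [pAut pn pf]] :=
  induced_aut law sgM NM fH f_onto fM f_ker phiM phi_mul phiN phi_n n_gt0.
have inS y := mem_fXset_hom law sgM fH fM n phiM (y := y) pf.
have XS : Xset mul one n phi M `<=` hom_preim M f (fXset n p H).
  by move=> y [My ty]; split; rewrite // inS // ty (hom1 law sgM fM).
have S_neq_H : fXset n p H != H :> {set gT}.
  apply: (contraTneq _ (fH _ Mx)) => <-; rewrite inS //.
  by apply/eqP => /(f_ker _ (twisted_normM sgM phiM n Mx)) [].
apply: (@le_trans _ _ (mu (hom_preim M f (fXset n p H)))).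
  apply: le_measure => //; rewrite inE.
    apply: measurable_closed; exact: (closed_Xset law mul_cont sgM oM phiM phi_cont).
  apply: (measurable_hom_preim law sgM NM f_onto fM f_ker mul_cont N_on.2).
  exact: fXset_sub.
rewrite (haar_hom_preim law sgM NM fH f_onto fM f_ker mul_cont N_on.2 haar)
  ?fXset_sub //.
by rewrite lee_fin le_cX.
Qed.
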